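(* Let $G=(V,E)$ be an undirected graph with nonnegative edge weights, not necessarily planar. Let $Q$ be a shortest path in $G$, let $u\in V$, and let $\epsilon',\epsilon''>0$. Let $H$ be an undirected graph with nonnegative edge weights such that $u\in V(H)\subseteq V$ and $d_H(v_1,v_2)\ge d_G(v_1,v_2)$ for all $v_1,v_2\in V(H)$. Assume that for every $v\in V(Q)$ there is a vertex $v'\in V(H)\cap V(Q)$ with $$d_H(u,v')+d_Q(v',v)\le (1+\epsilon')\,d_G(u,v).$$ Then there is a subset $P_H\subseteq V(H)\cap V(Q)$ of size $O(1/\epsilon'')$ such that for every $v\in V(Q)$ there is a $p\in P_H$ with $$d_H(u,p)+d_Q(p,v)\le (1+\epsilon')(1+\epsilon'')\,d_G(u,v).$$
   Context: For a graph $X$ with nonnegative edge weights, $d_X(a,b)$ denotes the shortest-path distance between $a$ and $b$ in $X$. For the path $Q$, $d_Q(a,b)$ is the weight of the subpath of $Q$ between $a$ and $b$. *)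

From mathcomp Require Import all_boot.
From Stdlib Require Import Reals ClassicalEpsilon.

Set Implicit Arguments.
Unset Strict Implicit.
Unset Printing Implicit Defensive.

Local Open Scope R_scope.

(* Extended nonnegative values: [None] stands for +infinity. *)
Definition oadd (x y : option R) : option R :=
  match x, y with Some a, Some b => Some (a + b) | _, _ => None end.
Definition oscale (c : R) (x : option R) : option R :=
  match x with Some a => Some (c * a) | None => None end.
Definition ole (x y : option R) : Prop :=
  match x, y with
  | _, None => True
  | None, Some _ => False
  | Some a, Some b => a <= b
  end.

(* A weighted undirected graph on (a subset of) a finite vertex type V is
   given by its weight function: [w x y = Some c] iff {x,y} is an edge of
   weight c, [None] iff there is no edge. *)
Definition wgraph (V : Type) := V -> V -> option R.

Definition nonneg_sym_graph (V : Type) (w : wgraph V) : Prop :=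
  (forall x y, w x y = w y x) /\
  (forall x y c, w x y = Some c -> 0 <= c).

Definition graph_on (V : finType) (VH : {set V}) (w : wgraph V) : Prop :=
  forall x y c, w x y = Some c -> x \in VH /\ y \in VH.

Fixpoint walk_w (V : Type) (w : wgraph V) (x : V) (s : seq V) : option R :=
  match s with
  | [::] => Some 0
  | y :: s' => oadd (w x y) (walk_w w y s')
  end.

Definition walk_len (V : Type) (w : wgraph V) (a b : V) (l : R) : Prop :=
  exists s : seq V, last a s = b /\ walk_w w a s = Some l.

Definition is_dist (V : Type) (w : wgraph V) (a b : V) (d : option R) : Prop :=
  match d with
  | None => forall l, ~ walk_len w a b l
  | Some x => walk_len w a b x /\ forall l, walk_len w a b l -> x <= l
  end.

Definition gdist (V : Type) (w : wgraph V) (a b : V) : option R :=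
  epsilon (inhabits None) (is_dist w a b).

Definition is_path (V : finType) (w : wgraph V) (x0 : V) (qs : seq V) : Prop :=
  uniq (x0 :: qs) /\ exists L, walk_w w x0 qs = Some L.

Definition is_shortest_path (V : finType) (w : wgraph V) (x0 : V) (qs : seq V)
  : Prop :=
  is_path w x0 qs /\ walk_w w x0 qs = gdist w x0 (last x0 qs).

Definition qpre (V : finType) (w : wgraph V) (x0 : V) (qs : seq V) (i : nat) : R :=
  odflt 0 (walk_w w x0 (take i qs)).

Definition dQ (V : finType) (w : wgraph V) (x0 : V) (qs : seq V) (a b : V) : R :=
  Rabs (qpre w x0 qs (index b (x0 :: qs)) - qpre w x0 qs (index a (x0 :: qs))).

(* Say v serves w when (1 + eps') d(v) + d_Q(v, w) <= (1 + eps')(1 + eps'') d(w),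
   where d = d_G(u, .); the portal of v given by the hypothesis then serves w in H,
   by the triangle inequality along Q.  Let v0 be the vertex of Q closest to u and
   t the arc length along Q.  As Q is a shortest path, |t(w) - t(v0)| <= d(v0) + d(w),
   so for the vertices w on one side of v0 not served by v0 the key
   (1 + eps') d(w) - |t(w) - t(v0)| lies in [-M, M) with M = (1 + eps') d(v0).
   Cut this interval into 2 / eps'' buckets of width eps'' M <= eps'' (1 + eps') d(w)
   and keep in each bucket the vertex nearest to v0: it serves the whole bucket. *)
From mathcomp Require Import all_boot.
From Stdlib Require Import Reals Lra ZArith ClassicalEpsilon Classical.
Set Implicit Arguments.
Unset Strict Implicit.
Local Open Scope R_scope.

Lemma seq_argmin (T : eqType) (l : seq T) (P : T -> Prop) (f : T -> R) :
  (exists x, x \in l /\ P x) ->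
  exists x, [/\ x \in l, P x & forall y, y \in l -> P y -> f x <= f y].
Proof.
elim: l => [|a l IH] [x [xl Px]] //.
have [[m [ml Pm m_min]]|no_l] := classic (exists m, [/\ m \in l, P m &
  forall y, y \in l -> P y -> f m <= f y]).
- have [[Pa am]|not_a] := classic (P a /\ f a <= f m).
    exists a; split; rewrite ?mem_head // => y; rewrite inE => /orP[/eqP->|yl] Py.
      exact: Rle_refl.
    exact: Rle_trans am (m_min y yl Py).
  exists m; split; rewrite ?inE ?ml ?orbT // => y.
  rewrite inE => /orP[/eqP->|]; last exact: m_min.
  by move=> Pa; apply: Rnot_lt_le => am; apply: not_a; split; [|lra].
- have none_l : forall y, y \in l -> ~ P y.
    by move=> y yl Py; apply: no_l; apply: IH; exists y.
  exists a; split; first exact: mem_head.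
  + by move: xl; rewrite inE => /orP[/eqP<- //|/none_l].
  + by move=> y; rewrite inE => /orP[/eqP-> _|/none_l //]; apply: Rle_refl.
Qed.

Lemma oadd_ole_shift x a b a' b' :
  ole (oadd x (Some a)) (Some b) -> a' - a <= b' - b ->
  ole (oadd x (Some a')) (Some b').
Proof. by case: x => //= c; lra. Qed.

Section Walks.
Variables (V : eqType) (w : wgraph V).

Lemma walk_w_cat x s1 s2 :
  walk_w w x (s1 ++ s2) = oadd (walk_w w x s1) (walk_w w (last x s1) s2).
Proof.
elim: s1 x => [|y s1 IH] x /=.
  by case: (walk_w w x s2) => // a; rewrite Rplus_0_l.
rewrite IH; case: (w x y) => [a|] //; case: (walk_w w y s1) => [b|] //=.
by case: (walk_w _ _ s2) => [c|] //=; rewrite Rplus_assoc.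
Qed.

Lemma last_rev_belast (y : V) s : last (last y s) (rev (belast y s)) = y.
Proof.
have : rev (y :: s) = last y s :: rev (belast y s) by rewrite lastI rev_rcons.
by rewrite rev_cons => /(congr1 (last y)); rewrite last_rcons /=.
Qed.

Hypothesis w_sym : forall x y, w x y = w y x.

Lemma walk_w_rev x s : walk_w w x s = walk_w w (last x s) (rev (belast x s)).
Proof.
elim: s x => [|y s IH] x //=.
rewrite rev_cons -cats1 walk_w_cat -IH last_rev_belast /= w_sym.
case: (w y x) => [a|]; case: (walk_w w y s) => [b|] //=.
by rewrite Rplus_0_r Rplus_comm.
Qed.

Hypothesis w_ge0 : forall x y c, w x y = Some c -> 0 <= c.

Lemma walk_w_ge0 x s c : walk_w w x s = Some c -> 0 <= c.
Proof.
elim: s x c => [|y s IH] x c /=; first by case=> <-; lra.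
case E: (w x y) => [a|] //; case E2: (walk_w w y s) => [b|] //= [<-].
have := w_ge0 E; have := IH _ _ E2; lra.
Qed.

(* Cutting out the closed subwalk between two visits of x only removes weight. *)
Lemma walk_w_uniq x s l : walk_w w x s = Some l ->
  exists s' l', [/\ uniq (x :: s'), last x s' = last x s,
    walk_w w x s' = Some l' & l' <= l].
Proof.
elim: s x l => [|y s IH] x l /=.
  by move=> h; exists [::], l; split => //; lra.
case E: (w x y) => [a|] //; case E2: (walk_w w y s) => [b|] //= [<-].
have [t [l' [ut lt wt le]]] := IH _ _ E2.
have a_ge0 := w_ge0 E.
case xin: (x \in y :: t); last first.
  exists (y :: t), (a + l'); split; rewrite /= ?E ?wt //; last lra.
  by rewrite -/(uniq (y :: t)) ut andbT xin.
move: xin; rewrite inE => /orP [/eqP ->|xt].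
  by exists t, l'; split => //; lra.
move: ut lt wt; case/path.splitP: xt => p1 p2 ut lt.
rewrite walk_w_cat last_rcons.
case E3: (walk_w w y (rcons p1 x)) => [c|] //.
case E4: (walk_w w x p2) => [d|] //= [Ed].
have c_ge0 := walk_w_ge0 E3.
exists p2, d; split => //; last lra.
- move: ut; rewrite -cat_cons cat_uniq => /and3P [_ hn ->].
  rewrite andbT; apply/negP => xp2; move/hasP: hn; apply.
  by exists x => //; rewrite -cats1 -cat_cons mem_cat mem_seq1 eqxx orbT.
- by rewrite -lt last_cat last_rcons.
Qed.

End Walks.

Fixpoint seqs_upto (V : finType) (n : nat) : seq (seq V) :=
  if n is n'.+1 then [::] :: [seq x :: s | x <- enum V, s <- seqs_upto V n']
  else [:: [::]].

Lemma mem_seqs_upto (V : finType) n (s : seq V) :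
  (size s <= n)%nat -> s \in seqs_upto V n.
Proof.
elim: n s => [|n IH] [|x s] //= hs; rewrite inE; apply/orP; right.
by apply: (allpairs_f (fun x s => x :: s)); [rewrite mem_enum | exact: IH].
Qed.

Section Distance.
Variables (V : finType) (w : wgraph V).
Hypothesis w_ge0 : forall x y c, w x y = Some c -> 0 <= c.

(* Minimise over the finitely many duplicate-free walks, which suffice by
   walk_w_uniq. *)
Lemma is_dist_exists a b : exists d, is_dist w a b d.
Proof.
have [[l0 [s0 [ls0 ws0]]]|none] := classic (exists l, walk_len w a b l); last first.
  by exists None => l hl; apply: none; exists l.
pose P s := last a s = b /\ exists x, walk_w w a s = Some x.
pose f s := odflt 0 (walk_w w a s).
have simple_walk s l : last a s = b -> walk_w w a s = Some l ->
    exists s', [/\ s' \in seqs_upto V #|V|, P s' & f s' <= l].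
  move=> hl hs; have [s' [l' [u' ls' ws' le]]] := walk_w_uniq w_ge0 hs.
  exists s'; split; last by rewrite /f ws'.
  - apply: mem_seqs_upto; apply: ltnW.
    by rewrite -[(size _).+1]/(size (a :: s')) -(card_uniqP u') max_card.
  - by split; [rewrite ls' | exists l'].
have [s1 [s1in Ps1 _]] := simple_walk _ _ ls0 ws0.
have [m [min [lm [x wm]] m_min]] := seq_argmin f (ex_intro _ s1 (conj s1in Ps1)).
exists (Some x); split; first by exists m.
move=> l [s [hl hs]]; have [s' [s'in Ps' le]] := simple_walk _ _ hl hs.
have := m_min _ s'in Ps'; move: le; rewrite /f wm /=; lra.
Qed.

Lemma gdist_spec a b : is_dist w a b (gdist w a b).
Proof. exact: epsilon_spec (is_dist_exists a b). Qed.

Lemma gdist_walk a b x : gdist w a b = Some x -> walk_len w a b x.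
Proof. by move=> E; have := gdist_spec a b; rewrite E => -[]. Qed.

Lemma gdist_min a b x l : gdist w a b = Some x -> walk_len w a b l -> x <= l.
Proof. by move=> E; have := gdist_spec a b; rewrite E => -[_]; apply. Qed.

Lemma gdist_ge0 a b x : gdist w a b = Some x -> 0 <= x.
Proof. by case/gdist_walk => s [_ /(walk_w_ge0 w_ge0)]. Qed.

End Distance.

Section ShortestPath.
Variables (V : finType) (w : wgraph V) (x0 : V) (qs : seq V).

Definition qpos (v : V) : R := qpre w x0 qs (index v (x0 :: qs)).

Lemma dQE a b : dQ w x0 qs a b = Rabs (qpos b - qpos a).
Proof. by []. Qed.

Lemma walk_split_at L v : walk_w w x0 qs = Some L -> v \in x0 :: qs ->
  let i := index v (x0 :: qs) in
  [/\ walk_w w x0 (take i qs) = Some (qpos v), last x0 (take i qs) = v,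
      walk_w w v (drop i qs) = Some (L - qpos v) &
      last v (drop i qs) = last x0 qs].
Proof.
move=> wL vQ i.
have i_le : (i <= size qs)%nat by rewrite -ltnS index_mem.
have last_take : last x0 (take i qs) = v.
  rewrite (last_nth x0) size_takel // -[in RHS](nth_index x0 vQ) -/i.
  by case: i i_le => [|j] //= j_lt; rewrite nth_take.
move: wL; rewrite -[in walk_w _ _ qs](cat_take_drop i qs) walk_w_cat last_take.
rewrite /qpos /qpre -/i.
case: (walk_w w x0 (take i qs)) => [a|] //.
case: (walk_w w v (drop i qs)) => [b|] //= [<-].
split => //; first by congr Some; ring.
by rewrite -last_take -last_cat cat_take_drop.
Qed.

Hypotheses (w_nonneg_sym : nonneg_sym_graph w) (Q_shortest : is_shortest_path w x0 qs).

(* Going from a back to u and then to b is a detour that Q, being shortest,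
   cannot beat. *)
Lemma qpos_sub_le u a b da db : a \in x0 :: qs -> b \in x0 :: qs ->
  gdist w u a = Some da -> gdist w u b = Some db -> qpos b - qpos a <= da + db.
Proof.
case: w_nonneg_sym Q_shortest => w_sym w_ge0 [[_ [L wL]] Q_dist] aQ bQ ua ub.
have [wa1 la1 _ _] := walk_split_at wL aQ.
have [_ _ wb2 lb2] := walk_split_at wL bQ.
have [sa [lsa wsa]] := gdist_walk w_ge0 ua.
have [sb [lsb wsb]] := gdist_walk w_ge0 ub.
have wa_rev : walk_w w a (rev (belast u sa)) = Some da.
  by rewrite -lsa -(walk_w_rev w_sym).
have la_rev : last a (rev (belast u sa)) = u by rewrite -lsa last_rev_belast.
have detour : walk_len w x0 (last x0 qs) (qpos a + (da + (db + (L - qpos b)))).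
  exists (take (index a (x0 :: qs)) qs ++ (rev (belast u sa) ++
          (sb ++ drop (index b (x0 :: qs)) qs))).
  by rewrite !last_cat !walk_w_cat la1 la_rev lsb lb2 wa1 wa_rev wsb wb2.
have := gdist_min w_ge0 (etrans (esym Q_dist) wL) detour; lra.
Qed.

End ShortestPath.

Lemma nat_ceil x : 0 <= x -> exists n : nat, x <= INR n <= x + 1.
Proof.
move=> x_ge0; have [up_gt up_le] := archimed x.
have up_ge0 : (0 <= up x)%Z by apply/Z.lt_le_incl/lt_IZR; lra.
by exists (Z.to_nat (up x)); rewrite INR_IZR_INZ Z2Nat.id //; lra.
Qed.

(* One representative per bucket [lo + j del, lo + (j + 1) del) of b, chosen with
   minimal a. *)
Lemma bucket_reps (T : eqType) (l : seq T) (P : T -> Prop) (a b : T -> R)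
    (lo del : R) (n : nat) :
  (forall w, w \in l -> P w -> lo <= b w < lo + INR n * del) ->
  exists pl : seq T, [/\ forall v, v \in pl -> v \in l /\ P v,
    (size pl <= n)%nat &
    forall w, w \in l -> P w -> exists2 v, v \in pl & b v < b w + del /\ a v <= a w].
Proof.
elim: n P => [|n IH] P b_range.
  exists [::]; split => // w wl Pw; have := b_range w wl Pw; rewrite /=; lra.
have [|pl [pl_in pl_size pl_cov]] := IH (fun w => P w /\ b w < lo + INR n * del).
  by move=> w wl [Pw bw]; have := b_range w wl Pw; lra.
have [top|no_top] := classic (exists x, x \in l /\ (P x /\ lo + INR n * del <= b x)).
- have [m [ml [Pm bm] m_min]] := seq_argmin a top.
  exists (m :: pl); split => [v||w wl Pw].
  + by rewrite inE => /orP[/eqP->|/pl_in[? []]].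
  + exact: pl_size.
  + have [bw|bw] := Rlt_le_dec (b w) (lo + INR n * del).
      by have [v vpl cov] := pl_cov w wl (conj Pw bw); exists v; rewrite ?inE ?vpl ?orbT.
    exists m; first exact: mem_head.
    have := b_range m ml Pm; rewrite S_INR; split; [lra | exact: m_min].
- exists pl; split => [v /pl_in[? []]||w wl Pw] //; first exact: leqW.
  have [bw|bw] := Rlt_le_dec (b w) (lo + INR n * del); first by apply: pl_cov.
  by exfalso; apply: no_top; exists w.
Qed.

Section Selection.
Variables (T : eqType) (l : seq T) (P : T -> Prop) (d : T -> R) (e1 e2 : R).
Hypotheses (e1_gt0 : 0 < e1) (e2_gt0 : 0 < e2)
  (d_ge0 : forall w, w \in l -> P w -> 0 <= d w).

Lemma cover_right (t : T -> R) v0 :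
  (forall a b, a \in l -> b \in l -> P a -> P b -> t b - t a <= d a + d b) ->
  v0 \in l -> P v0 -> (forall w, w \in l -> P w -> d v0 <= d w) ->
  exists pl : seq T, [/\ forall v, v \in pl -> v \in l /\ P v,
    INR (size pl) <= 2 / e2 + 1 &
    forall w, w \in l -> P w -> t v0 <= t w ->
      (1 + e1) * d w - (t w - t v0) < (1 + e1) * d v0 ->
      exists2 v, v \in pl &
        (1 + e1) * d v + Rabs (t w - t v) <= (1 + e1) * (1 + e2) * d w].
Proof.
move=> t_tri v0l Pv0 v0_min.
have dv0_ge0 := d_ge0 v0l Pv0.
set M := (1 + e1) * d v0.
have M_ge0 : 0 <= M by rewrite /M; nra.
have [N [N_lb N_ub]] : exists N : nat, 2 / e2 <= INR N <= 2 / e2 + 1.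
  by apply: nat_ceil; apply: Rlt_le; apply: Rdiv_lt_0_compat; lra.
have N_e2 : 2 <= INR N * e2.
  have -> : 2 = 2 / e2 * e2 by field; lra.
  exact: Rmult_le_compat_r (Rlt_le _ _ e2_gt0) N_lb.
pose a w := t w - t v0.
pose b w := (1 + e1) * d w - a w.
have [|pl [pl_in pl_size pl_cov]] :=
  @bucket_reps _ l (fun w => P w /\ 0 <= a w /\ b w < M) a b (- M) (e2 * M) N.
  move=> w wl [Pw [_ bw]]; have := t_tri v0 w v0l wl Pv0 Pw.
  have := Rmult_le_pos _ _ (Rlt_le _ _ e1_gt0) (d_ge0 wl Pw).
  have := Rmult_le_compat_r M _ _ M_ge0 N_e2.
  rewrite /b /a /M in bw *; nra.
exists pl; split => [v /pl_in[? []] //||w wl Pw tw bw].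
  by apply: Rle_trans N_ub; apply/le_INR/leP.
have aw : 0 <= a w by rewrite /a; lra.
have [v vpl [bv av_le]] := pl_cov w wl (conj Pw (conj aw bw)).
exists v => //; rewrite /b /a in bv av_le; rewrite Rabs_pos_eq; last lra.
have := Rmult_le_compat_l (e2 * (1 + e1)) _ _ ltac:(nra) (v0_min w wl Pw).
rewrite /M in bv; lra.
Qed.

Lemma cover_all (t : T -> R) :
  (forall a b, a \in l -> b \in l -> P a -> P b -> t b - t a <= d a + d b) ->
  exists pl : seq T, [/\ forall v, v \in pl -> v \in l /\ P v,
    INR (size pl) <= 3 + 4 / e2 &
    forall w, w \in l -> P w -> exists2 v, v \in pl &
      (1 + e1) * d v + Rabs (t w - t v) <= (1 + e1) * (1 + e2) * d w].
Proof.
move=> t_tri.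
have [nonempty|empty] := classic (exists x, x \in l /\ P x); last first.
  exists [::]; split => // [|w wl Pw]; last by exfalso; apply: empty; exists w.
  have : 0 < 4 / e2 by apply: Rdiv_lt_0_compat; lra.
  rewrite /=; lra.
have [v0 [v0l Pv0 v0_min]] := seq_argmin d nonempty.
have [plR [plR_in plR_size plR_cov]] := cover_right t_tri v0l Pv0 v0_min.
have opp_tri a b : a \in l -> b \in l -> P a -> P b -> - t b - - t a <= d a + d b.
  by move=> al bl Pa Pb; have := t_tri b a bl al Pb Pa; lra.
have [plL [plL_in plL_size plL_cov]] := cover_right opp_tri v0l Pv0 v0_min.
exists (v0 :: plR ++ plL); split.
- by move=> x; rewrite inE mem_cat => /orP [/eqP ->|/orP [/plR_in|/plL_in]].
- by rewrite [size _]/= S_INR size_cat plus_INR; lra.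
move=> w wl Pw.
have dw_ge0 := d_ge0 wl Pw.
have [near|far] := Rle_lt_dec ((1 + e1) * d v0) ((1 + e1) * d w - Rabs (t w - t v0)).
  exists v0; first exact: mem_head.
  have : 0 <= e2 * ((1 + e1) * d w) by apply: Rmult_le_pos; nra.
  lra.
have [right|left] := Rle_lt_dec (t v0) (t w).
  have [v vpl cov] := plR_cov w wl Pw right ltac:(rewrite Rabs_pos_eq in far; lra).
  by exists v; rewrite // inE mem_cat vpl orbT.
have [v vpl cov] := plL_cov w wl Pw ltac:(lra) ltac:(rewrite Rabs_left in far; lra).
exists v; first by rewrite inE mem_cat vpl !orbT.
by rewrite -Rabs_Ropp; move: cov; congr (_ + Rabs _ <= _); ring.
Qed.

End Selection.

Lemma seq_choice (S T : eqType) (R : S -> T -> Prop) (s : seq S) :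
  (forall x, x \in s -> exists y, R x y) ->
  exists s' : seq T, [/\ size s' = size s,
    forall y, y \in s' -> exists2 x, x \in s & R x y &
    forall x, x \in s -> exists2 y, y \in s' & R x y].
Proof.
elim: s => [|x s IH] all_R; first by exists [::].
have [y Rxy] := all_R x (mem_head x s).
have [|s' [size_s' from_s' to_s']] := IH.
  by move=> z zs; apply: all_R; rewrite inE zs orbT.
exists (y :: s'); split => [|z|z]; first by rewrite /= size_s'.
- rewrite inE => /orP[/eqP->|/from_s'[z' z's Rz]]; first by exists x; rewrite ?mem_head.
  by exists z'; rewrite ?inE ?z's ?orbT.
- rewrite inE => /orP[/eqP->|/to_s'[z' z's Rz]]; first by exists y; rewrite ?mem_head.
  by exists z'; rewrite ?inE ?z's ?orbT.
Qed.

Theorem lemma2 :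
  exists C : R, 0 < C /\
  forall (V : finType) (wG : wgraph V) (x0 : V) (qs : seq V) (u : V)
         (eps1 eps2 : R) (VH : {set V}) (wH : wgraph V),
    nonneg_sym_graph wG ->
    is_shortest_path wG x0 qs ->
    0 < eps1 -> 0 < eps2 ->
    nonneg_sym_graph wH -> graph_on VH wH ->
    u \in VH ->
    (forall v1 v2, v1 \in VH -> v2 \in VH ->
        ole (gdist wG v1 v2) (gdist wH v1 v2)) ->
    (forall v, v \in x0 :: qs ->
        exists v', [/\ v' \in VH, v' \in x0 :: qs &
          ole (oadd (gdist wH u v') (Some (dQ wG x0 qs v' v)))
              (oscale (1 + eps1) (gdist wG u v))]) ->
    exists PH : {set V},
      [/\ PH \subset VH, {subset PH <= x0 :: qs},
          INR #|PH| <= C * (1 + / eps2) &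
          forall v, v \in x0 :: qs ->
            exists2 p, p \in PH &
              ole (oadd (gdist wH u p) (Some (dQ wG x0 qs p v)))
                  (oscale ((1 + eps1) * (1 + eps2)) (gdist wG u v))].
Proof.
exists 4; split; first lra.
move=> V wG x0 qs u e1 e2 VH wH G_graph Q_shortest e1_gt0 e2_gt0 _ _ _ _ portals.
pose d v := odflt 0 (gdist wG u v).
pose P v := exists x, gdist wG u v = Some x.
have d_ge0 v : v \in x0 :: qs -> P v -> 0 <= d v.
  by move=> _ [x ux]; rewrite /d ux; apply: gdist_ge0 ux; case: G_graph.
have d_tri a b : a \in x0 :: qs -> b \in x0 :: qs -> P a -> P b ->
    qpos wG x0 qs b - qpos wG x0 qs a <= d a + d b.
  by move=> aQ bQ [xa ua] [xb ub]; rewrite /d ua ub; apply: qpos_sub_le ua ub.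
have [pl [pl_in pl_size pl_cov]] := cover_all e1_gt0 e2_gt0 d_ge0 d_tri.
have sel_Q x : x \in x0 :: pl -> x \in x0 :: qs.
  by rewrite inE => /orP[/eqP->|/pl_in[]//]; rewrite mem_head.
have [ps [ps_size ps_portal ps_cov]] :=
  seq_choice (fun x xsel => portals x (sel_Q x xsel)).
exists [set x in ps]; split.
- by apply/subsetP => y; rewrite inE => /ps_portal[x _ []].
- by move=> y; rewrite inE => /ps_portal[x _ []].
- apply: Rle_trans (_ : INR (size ps) <= _).
    by apply/le_INR/leP; rewrite cardsE card_size.
  have -> : 4 * (1 + / e2) = 3 + 4 / e2 + 1 by rewrite /Rdiv; ring.
  by rewrite ps_size [size _]/= S_INR; apply: Rplus_le_compat_r.
move=> v vQ.
case uv: (gdist wG u v) => [y|]; last first.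
  by have [p ? _] := ps_cov x0 (mem_head x0 pl); exists p; rewrite ?inE //; case: oadd.
have [v' v'pl cov] := pl_cov v vQ (ex_intro _ y uv).
have [_ [y' uv']] := pl_in v' v'pl.
have [p p_ps [_ _ portal]] := ps_cov v' ltac:(by rewrite inE v'pl orbT).
rewrite uv' /= in portal; exists p; first by rewrite inE.
apply: oadd_ole_shift portal _; move: cov; rewrite /d uv uv' /= !dQE.
set tv := qpos wG x0 qs v; set tv' := qpos wG x0 qs v'; set tp := qpos wG x0 qs p.
have := Rabs_triang (tv - tv') (tv' - tp).
have -> : tv - tv' + (tv' - tp) = tv - tp by ring.
lra.
Qed.
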